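(* Let $\Gamma=\Gamma(S_{d_0},HF)$ be a finitely generated saturated directed group acting on $T_{\bar d}$ with $\bar d$ bounded by $D$. There is a constant $C$ depending only on $D$ and $\#HF$ such that for every integer $r\ge0$, $$\#\{\gamma\in\Gamma:\ \text{there is an alternate word } w \text{ representing }\gamma\text{ with } a(w)\le r\}\le C^r.$$
   Context: $\bar d=(d_j)_{j\ge0}$ is a bounded sequence of integers $d_j\ge2$, $D=\max_j d_j$, and $\sigma\bar d=(d_1,d_2,\dots)$. $T_{\bar d}$ is the spherically homogeneous rooted tree with vertices the finite sequences $i_1\dots i_k$, $i_j\in\{1,\dots,d_{j-1}\}$; $\partial T_{\bar d}$ is its boundary; $1^\infty=111\dots$. Products of automorphisms follow $(gf)(x)=f(g(x))$. Each $g\in\mathrm{Aut}(T_{\bar d})$ is written $g=(g_1,\dots,g_{d_0})\tau$ ($g_t\in\mathrm{Aut}(T_{\sigma\bar d})$, $\tau\in S_{d_0}$, $g(ty)=\tau(t)g_t(y)$); $g$ is rooted if all $g_t=1$, and rooted automorphisms form a copy of $S_{d_0}$. $H_{\bar d}$ is defined recursively: $h\in H_{\bar d}$ iff $h=(h',\sigma_2,\dots,\sigma_{d_0})$ (trivial root permutation) with $h'\in H_{\sigma\bar d}$ and $\sigma_2,\dots,\sigma_{d_0}$ rooted automorphisms of $T_{\sigma\bar d}$; this gives $H_{\bar d}\cong\prod_{l\ge1}S_{d_l}^{\,d_{l-1}-1}$, the coordinates $\sigma_2,\dots,\sigma_{d_0}$ giving the $d_0-1$ factors $S_{d_1}$ and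 the other factors coming recursively from $h'$. Let $F$ be a finite group; $F\wr_{\partial T_{\bar d}}\mathrm{Aut}(T_{\bar d})=\{\varphi:\partial T_{\bar d}\to F\}\rtimes\mathrm{Aut}(T_{\bar d})$ with $(g.\varphi)(x)=\varphi(g(x))$ and $(\varphi g)(\varphi'g')=\varphi(g.\varphi')gg'$; for $f\in F$, $\varphi_f$ is the function equal to $f$ at $1^\infty$ and trivial elsewhere (it commutes with $H_{\bar d}$). A finitely generated saturated directed group $\Gamma(S_{d_0},HF)$ is the subgroup of $F\wr_{\partial T_{\bar d}}\mathrm{Aut}(T_{\bar d})$ generated by the rooted group $S_{d_0}$, a finite subgroup $H\le H_{\bar d}$ such that the pushforward of the uniform measure on $H$ to each factor $S_{d_l}$ is uniform, and $\{\varphi_f:f\in F\}$; $HF=\{h\varphi_f\}\cong H\times F$ is a finite subgroup. An alternate word is a word $w=s_1k_1s_2k_2\cdots s_nk_ns_{n+1}$ with $s_i\in S_{d_0}$, $k_i\in HF$; writing $k_j=\varphi_{f_j}h_j$, let $g_j=s_1h_1s_2h_2\cdots h_{j-1}s_j\in\mathrm{Aut}(T_{\bar d})$. The activity of $w$ is $a(w)=\#\{g_j^{-1}(1^\infty):1\le j\le n\}$ (so $a(w)=0$ when $n=0$). *)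

From HB Require Import structures.
From mathcomp Require Import all_boot all_fingroup.
From Stdlib Require Import ClassicalEpsilon.

Set Implicit Arguments.
Unset Strict Implicit.
Unset Printing Implicit Defensive.

(* Conventions:
   - the sequence d_0, d_1, ... is a function d : nat -> nat;
   - letters at level j are 0-based: {0, ..., d j - 1}; the paper's letter 1
     is our letter 0, so the paper's ray 1^oo is the constant-0 sequence;
   - a boundary point of T_d is a sequence x : nat -> nat with x j < d j. *)

Definition bpt := nat -> nat.

Definition valid_pt (d : nat -> nat) (x : bpt) : Prop := forall j, x j < d j.

Definition one_pt : bpt := fun _ => 0.

Definition pb (P : Prop) : bool :=
  if excluded_middle_informative P then true else false.

(* A permutation of 'I_n acting on a letter (letters >= n are left fixed;
   this never happens for valid points). *)
Definition permn (n : nat) (s : {perm 'I_n}) (k : nat) : nat :=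
  oapp (fun i : 'I_n => val (s i)) k (insub k).

Definition root_act (d : nat -> nat) (s : {perm 'I_(d 0)}) (x : bpt) : bpt :=
  fun j => if j == 0 then permn s (x 0) else x j.

(* Elements of H_d = prod_{l>=1} S_{d_l}^{d_{l-1}-1}: for every level l and
   every letter t <> 0 (paper: t in {2..d_{l}}) of the alphabet at level l, a
   permutation sigma_{l,t} of the alphabet at level l+1.  The value at t = 0
   is irrelevant (never used). *)
Definition Hd (d : nat -> nat) := forall l : nat, 'I_(d l) -> {perm 'I_(d l.+1)}.

(* Action of h in H_d on boundary points (recursive definition unfolded):
   if x = 0^l t y with t <> 0, then the letter at position l+1 is permuted by
   sigma_{l,t}; all other letters (and the point 0^oo) are fixed. *)
Definition hact (d : nat -> nat) (h : Hd d) (x : bpt) : bpt :=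
  fun j =>
    match j with
    | 0 => x 0
    | l.+1 =>
        if [forall i : 'I_l, x i == 0] && (x l != 0) then
          oapp (fun t : 'I_(d l) => permn (h l t) (x l.+1)) (x l.+1) (insub (x l))
        else x l.+1
    end.

Definition hinv (d : nat -> nat) (h : Hd d) : Hd d := fun l t => ((h l t)^-1)%g.

(* H <= H_d finite subgroup, presented as a finite group hT with an injective
   homomorphism rho : hT -> H_d. *)
Definition Hd_morph (d : nat -> nat) (hT : finGroupType) (rho : hT -> Hd d) : Prop :=
  forall (a b : hT) (l : nat) (t : 'I_(d l)), val t != 0 ->
    rho (a * b)%g l t = (rho a l t * rho b l t)%g.

Definition Hd_inj (d : nat -> nat) (hT : finGroupType) (rho : hT -> Hd d) : Prop :=
  forall a b : hT,
    (forall (l : nat) (t : 'I_(d l)), val t != 0 -> rho a l t = rho b l t) -> a = b.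

(* The pushforward of the uniform measure on H to each factor S_{d_{l+1}}
   (indexed by (l,t), t <> 0) is uniform. *)
Definition Hd_uniform (d : nat -> nat) (hT : finGroupType) (rho : hT -> Hd d) : Prop :=
  forall (l : nat) (t : 'I_(d l)), val t != 0 ->
    forall s : {perm 'I_(d l.+1)},
      #|[set a : hT | rho a l t == s]| * (d l.+1)`! = #|hT|.

(* Elements of F wr_{boundary} Aut(T_d): pairs (phi, g) with
   phi : boundary -> F and g acting on the boundary. *)
Definition elt (fT : finGroupType) := ((bpt -> fT) * (bpt -> bpt))%type.

(* Product (phi g)(phi' g') = phi (g.phi') g g', with (g.phi')(x) = phi'(g x)
   and (g g')(x) = g'(g x). *)
Definition emul (fT : finGroupType) (a b : elt fT) : elt fT :=
  (fun x => (a.1 x * b.1 (a.2 x))%g, fun x => b.2 (a.2 x)).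

Definition eeq (d : nat -> nat) (fT : finGroupType) (a b : elt fT) : Prop :=
  forall x, valid_pt d x -> a.1 x = b.1 x /\ (forall j, a.2 x j = b.2 x j).

Definition phi_f (fT : finGroupType) (f : fT) : bpt -> fT :=
  fun x => if pb (forall j, x j = one_pt j) then f else 1%g.

Definition erooted (d : nat -> nat) (fT : finGroupType) (s : {perm 'I_(d 0)}) : elt fT :=
  (fun _ => 1%g, root_act s).

Definition eHF (d : nat -> nat) (fT hT : finGroupType) (rho : hT -> Hd d)
  (a : hT) (f : fT) : elt fT := (phi_f f, hact (rho a)).

(* An alternate word w = s_1 k_1 s_2 k_2 ... s_n k_n s_{n+1} is encoded by
   s_1 and the list ks = [(k_1, s_2); ...; (k_n, s_{n+1})], each k_j given
   by a pair (a_j, f_j) in hT * F, i.e. k_j = phi_{f_j} rho(a_j). *)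
Definition weval (d : nat -> nat) (fT hT : finGroupType) (rho : hT -> Hd d)
  (s1 : {perm 'I_(d 0)}) (ks : seq ((hT * fT) * {perm 'I_(d 0)})) : elt fT :=
  foldl (fun e p => emul (emul e (eHF rho p.1.1 p.1.2)) (erooted fT p.2))
        (erooted fT s1) ks.

(* g_j^{-1}(1^oo) for the j-th letter k (0-based j), where
   g_j = s_1 h_1 s_2 ... h_{j-1} s_j, so
   g_j^{-1} = s_j^{-1} h_{j-1}^{-1} ... h_1^{-1} s_1^{-1} (applied left to right). *)
Definition ginv_pt (d : nat -> nat) (fT hT : finGroupType) (rho : hT -> Hd d)
  (s1 : {perm 'I_(d 0)}) (ks : seq ((hT * fT) * {perm 'I_(d 0)})) (j : nat) : bpt :=
  root_act (s1^-1)%g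
    (foldr (fun p y => hact (hinv (rho p.1.1)) (root_act (p.2^-1)%g y))
           one_pt (take j ks)).

Definition ndistinct (n : nat) (p : 'I_n -> bpt) : nat :=
  #|[set j : 'I_n | pb (forall j' : 'I_n, j' < j -> ~ (forall i, p j' i = p j i))]|.

Definition activity (d : nat -> nat) (fT hT : finGroupType) (rho : hT -> Hd d)
  (s1 : {perm 'I_(d 0)}) (ks : seq ((hT * fT) * {perm 'I_(d 0)})) : nat :=
  ndistinct (fun j : 'I_(size ks) => ginv_pt rho s1 ks j).

From HB Require Import structures.
From mathcomp Require Import all_boot all_fingroup.
From Stdlib Require Import FunctionalExtensionality ClassicalEpsilon.
From mathcomp Require Import zify.

(* A word w = s_1 k_1 ... k_n s_{n+1} maps a boundary point [i y] (first
   letter i) to [i' y'], where i' is the image of i under the product of the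
   rooted letters, and y |-> y', together with the F-label at [i y], is the
   action of a word w_i over the shifted tree T_{sigma d}: the section of w at
   i ([wsection], [section_state_act]).  The active points of w_i are the
   tails of the active points of w with first letter i
   ([section_state_active_pts]); hence the activities of the sections add up
   to at most a(w), and when a(w) >= 2 at least two sections are active.  A
   word whose rooted letters are all trivial ("pure") evaluates to phi_f h,
   with f and h the products of its letters ([weval_pure]).
   We encode words recursively ([code]): the empty word by s_1, a pure word by
   (prod h, prod f), any other word by the product of its rooted letters
   followed by the codes of its d_0 sections.  The code determines the element
   ([code_eval]), has length at most (D+1)(2a(w)-1)+1 ([code_size]) and is
   written in an alphabet whose size depends only on D and #H #F
   ([code_alphabet]).  Padding codes to a common length maps the words of
   activity at most r, up to evaluation, into a finite set of size C^r
   ([finite_representatives]). *)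

Set Implicit Arguments.
Unset Strict Implicit.
Unset Printing Implicit Defensive.

Lemma pbP (P : Prop) : reflect P (pb P).
Proof. by rewrite /pb; case: excluded_middle_informative => h; constructor. Qed.

Lemma pb_iff (P Q : Prop) : (P <-> Q) -> pb P = pb Q.
Proof. by move=> [PQ QP]; apply/idP/idP => /pbP h; apply/pbP; auto. Qed.

(* Boundary points have a (classically) decidable equality, so that lists of
   boundary points can be deduplicated. *)
Definition bpt_eqb (x y : bpt) : bool := pb (x = y).
Lemma bpt_eqP : Equality.axiom bpt_eqb.
Proof. by move=> x y; apply: pbP. Qed.
HB.instance Definition _ := hasDecEq.Build bpt bpt_eqP.

Definition pcons (c : nat) (y : bpt) : bpt := fun j => if j is k.+1 then y k else c.
Definition ptail (x : bpt) : bpt := fun j => x j.+1.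

Lemma pcons_eta (x : bpt) : x = pcons (x 0) (ptail x).
Proof. by apply: functional_extensionality => -[]. Qed.

Lemma pcons_inj c c' y y' : pcons c y = pcons c' y' -> c = c' /\ y = y'.
Proof.
move=> e; split; first exact: (congr1 (fun z : bpt => z 0) e).
exact: (congr1 ptail e).
Qed.

Lemma pcons0_one : pcons 0 one_pt = one_pt.
Proof. by apply: functional_extensionality => -[]. Qed.

Lemma pcons_eq_one c y : (pcons c y = one_pt) <-> (c = 0 /\ y = one_pt).
Proof.
split=> [e|[-> ->]]; last exact: pcons0_one.
by apply: pcons_inj; rewrite e pcons0_one.
Qed.

Lemma permnE n (s : {perm 'I_n}) (i : 'I_n) : permn s i = s i.
Proof. by rewrite /permn valK. Qed.

Lemma permn_ge n (s : {perm 'I_n}) k : n <= k -> permn s k = k.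
Proof. by move=> nk; rewrite /permn insubN // -leqNgt. Qed.

Lemma permnM n (s t : {perm 'I_n}) k : permn (s * t)%g k = permn t (permn s k).
Proof.
case: (ltnP k n) => [kn|nk]; last by rewrite !permn_ge.
by rewrite -[k]/(val (Ordinal kn)) !permnE permM.
Qed.

Lemma permn1 n k : permn (1%g : {perm 'I_n}) k = k.
Proof.
case: (ltnP k n) => [kn|nk]; last by rewrite permn_ge.
by rewrite -[k]/(val (Ordinal kn)) permnE perm1.
Qed.

Lemma permnK n (s : {perm 'I_n}) k : permn (s^-1)%g (permn s k) = k.
Proof. by rewrite -permnM mulgV permn1. Qed.

Lemma permnKV n (s : {perm 'I_n}) k : permn s (permn (s^-1)%g k) = k.
Proof. by rewrite -permnM mulVg permn1. Qed.

Lemma permn_lt n (s : {perm 'I_n}) k : (permn s k < n) = (k < n).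
Proof.
case: (ltnP k n) => [kn|nk]; last by rewrite permn_ge // ltnNge nk.
by rewrite -[k]/(val (Ordinal kn)) permnE !ltn_ord.
Qed.

Lemma root_act_pcons d (s : {perm 'I_(d 0)}) c y :
  root_act s (pcons c y) = pcons (permn s c) y.
Proof. by apply: functional_extensionality => -[]. Qed.

Lemma root_actM d (s t : {perm 'I_(d 0)}) x :
  root_act (s * t)%g x = root_act t (root_act s x).
Proof. by apply: functional_extensionality => -[|j]; rewrite /root_act //= permnM. Qed.

Lemma root_act1 d x : root_act (1%g : {perm 'I_(d 0)}) x = x.
Proof. by apply: functional_extensionality => -[|j]; rewrite /root_act //= permn1. Qed.

Lemma root_actK d (s : {perm 'I_(d 0)}) x : root_act (s^-1)%g (root_act s x) = x.
Proof. by rewrite -root_actM mulgV root_act1. Qed.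

Lemma root_actKV d (s : {perm 'I_(d 0)}) x : root_act s (root_act (s^-1)%g x) = x.
Proof. by rewrite -root_actM mulVg root_act1. Qed.

Definition sd (d : nat -> nat) : nat -> nat := fun j => d j.+1.
Definition shiftH d (h : Hd d) : Hd (sd d) := fun l t => h l.+1 t.
Definition hmul d (h1 h2 : Hd d) : Hd d := fun l t => (h1 l t * h2 l t)%g.

Lemma forallzP (x : bpt) l :
  reflect (forall i, i < l -> x i = 0) [forall i : 'I_l, x i == 0].
Proof.
apply: (iffP forallP) => H i; last exact/eqP/H.
by move=> il; apply/eqP; apply: (H (Ordinal il)).
Qed.

Lemma hact_pcons0 d (h : Hd d) y : hact h (pcons 0 y) = pcons 0 (hact (shiftH h) y).
Proof.
apply: functional_extensionality => -[|[|l]] //=; first by rewrite /hact /= andbF.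
rewrite /hact /=.
have -> : [forall i : 'I_l.+1, pcons 0 y i == 0] = [forall i : 'I_l, y i == 0] => //.
apply/forallzP/forallzP => H i il; first exact: (H i.+1 il).
by case: i il => // i il; apply: H.
Qed.

Lemma hact_pconsN d (h : Hd d) (c : nat) (cd : c < d 0) y : c != 0 ->
  hact h (pcons c y) = pcons c (@root_act (sd d) (h 0 (Ordinal cd)) y).
Proof.
move=> cn0; apply: functional_extensionality => -[|[|l]] //=.
  rewrite /hact /= cn0 andbT.
  have -> : [forall i : 'I_0, pcons c y i == 0] by apply/forallP => -[].
  by rewrite insubT.
rewrite /hact /=; case: forallzP => // H.
by have := H 0 erefl; move/eqP: cn0.
Qed.

(* Letters out of range (which valid points never contain) are fixed. *)
Lemma hact_pconsB d (h : Hd d) (c : nat) y : d 0 <= c -> c != 0 ->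
  hact h (pcons c y) = pcons c y.
Proof.
move=> dc cn0; apply: functional_extensionality => -[|[|l]] //=.
  by rewrite /hact /= cn0 andbT insubN -?leqNgt //; case: ifP.
rewrite /hact /=; case: forallzP => // H.
by have := H 0 erefl; move/eqP: cn0.
Qed.

Lemma hactM d (h1 h2 : Hd d) x : hact h2 (hact h1 x) = hact (hmul h1 h2) x.
Proof.
apply: functional_extensionality => j.
elim: j d h1 h2 x => [|j IH] d h1 h2 x //.
rewrite (pcons_eta x); case: (eqVneq (x 0) 0) => [->|cn0].
  by rewrite !hact_pcons0 /=; apply: IH.
case: (ltnP (x 0) (d 0)) => cd; last by rewrite !hact_pconsB.
by rewrite !(hact_pconsN _ cd) // -root_actM.
Qed.

Lemma hact_ext d (h h' : Hd d) x :
  (forall l (t : 'I_(d l)), val t != 0 -> h l t = h' l t) -> hact h x = hact h' x.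
Proof.
move=> H; apply: functional_extensionality => j.
elim: j d h h' H x => [|j IH] d h h' H x //.
rewrite (pcons_eta x); case: (eqVneq (x 0) 0) => [->|cn0].
  by rewrite !hact_pcons0 /=; apply: IH => l t; apply: H.
case: (ltnP (x 0) (d 0)) => cd; last by rewrite !hact_pconsB.
by rewrite !(hact_pconsN _ cd) // H.
Qed.

Lemma hact_id d (h : Hd d) x :
  (forall l (t : 'I_(d l)), val t != 0 -> h l t = 1%g) -> hact h x = x.
Proof.
move=> H; apply: functional_extensionality => j.
elim: j d h H x => [|j IH] d h H x //.
rewrite (pcons_eta x); case: (eqVneq (x 0) 0) => [->|cn0].
  by rewrite !hact_pcons0 /=; apply: IH => l t; apply: H.
case: (ltnP (x 0) (d 0)) => cd; last by rewrite !hact_pconsB.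
by rewrite !(hact_pconsN _ cd) // H // root_act1.
Qed.

Lemma hactK d (h : Hd d) x : hact (hinv h) (hact h x) = x.
Proof. by rewrite hactM hact_id // => l t _; rewrite /hmul /hinv mulgV. Qed.

Lemma hactKV d (h : Hd d) x : hact h (hact (hinv h) x) = x.
Proof. by rewrite hactM hact_id // => l t _; rewrite /hmul /hinv mulVg. Qed.

Lemma hact_one d (h : Hd d) : hact h one_pt = one_pt.
Proof. by apply: functional_extensionality => -[|l] //; rewrite /hact /one_pt /= andbF. Qed.

Lemma hact_eq_one d (h : Hd d) x : (hact h x = one_pt) <-> (x = one_pt).
Proof.
split=> [e|->]; last exact: hact_one.
by rewrite -(hactK h x) e hact_one.
Qed.

Lemma size_undup_rcons (T : eqType) (s : seq T) x :
  size (undup (rcons s x)) = size (undup s) + (x \notin s).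
Proof.
rewrite undup_rcons size_rcons size_filter.
have := count_predC (predC1 x) (undup s).
have -> : count (predC (predC1 x)) (undup s) = count_mem x (undup s).
  by apply: eq_count => y /=; rewrite negbK.
rewrite (count_uniq_mem _ (undup_uniq s)) mem_undup.
have -> : count (fun y => y != x) (undup s) = count (predC1 x) (undup s) by [].
by case: (x \in s) => /=; lia.
Qed.

Lemma ndistinctE (f : nat -> bpt) n :
  ndistinct (fun j : 'I_n => f j) = size (undup [seq f j | j <- iota 0 n]).
Proof.
have first_occ : forall j : 'I_n,
    pb (forall j' : 'I_n, j' < j -> ~ (forall i, f j' i = f j i))
    = pb (forall j' : nat, j' < j -> f j' <> f j).
  move=> j; apply: pb_iff; split => H j' j'j.
    have j'n : j' < n by apply: ltn_trans j'j (ltn_ord j).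
    by move=> e; apply: (H (Ordinal j'n) j'j) => i; rewrite e.
  by move=> e; apply: (H j' j'j); apply: functional_extensionality.
rewrite /ndistinct -sum1_card big_mkcond /=.
under eq_bigr => j _ do rewrite inE first_occ.
elim: n {first_occ} => [|n IH]; first by rewrite big_ord0.
have -> : iota 0 n.+1 = rcons (iota 0 n) n by rewrite -cats1 -addn1 iotaD.
rewrite big_ord_recr /= IH map_rcons size_undup_rcons.
congr (_ + nat_of_bool _); apply/pbP/idP => [H|/negP H j jn e].
  apply/mapP => -[j]; rewrite mem_iota add0n => /andP[_ jn] e.
  by apply: (H j jn); rewrite e.
by apply: H; apply/mapP; exists j; rewrite // mem_iota.
Qed.

Section Words.
Variables (fT hT : finGroupType).

Definition eid : elt fT := (fun _ => 1%g, id).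

Lemma emulA (a b c : elt fT) : emul (emul a b) c = emul a (emul b c).
Proof. by congr pair; apply: functional_extensionality => x; rewrite /= mulgA. Qed.

Lemma emul_e1 (a : elt fT) : emul a eid = a.
Proof. by case: a => f g; congr pair; apply: functional_extensionality => x; rewrite mulg1. Qed.

Lemma erooted1 d : erooted fT (1%g : {perm 'I_(d 0)}) = eid.
Proof. by congr pair; apply: functional_extensionality => x; apply: root_act1. Qed.

Lemma erootedM d (s t : {perm 'I_(d 0)}) :
  erooted fT (s * t)%g = emul (erooted fT s) (erooted fT t).
Proof.
congr pair; apply: functional_extensionality => x; first by rewrite mulg1.
exact: root_actM.
Qed.

Definition word d := ({perm 'I_(d 0)} * seq ((hT * fT) * {perm 'I_(d 0)}))%type.

Section FixedTree.
Variables (d : nat -> nat) (rho : hT -> Hd d).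
Implicit Types (s : {perm 'I_(d 0)}) (ks : seq ((hT * fT) * {perm 'I_(d 0)})).

Lemma weval_rcons s ks q :
  weval rho s (rcons ks q) =
  emul (emul (weval rho s ks) (eHF rho q.1.1 q.1.2)) (erooted fT q.2).
Proof. by rewrite /weval foldl_rcons. Qed.

Definition root_prod s ks : {perm 'I_(d 0)} := foldl (fun t q => (t * q.2)%g) s ks.

Lemma root_prod_rcons s ks q : root_prod s (rcons ks q) = (root_prod s ks * q.2)%g.
Proof. by rewrite /root_prod foldl_rcons. Qed.

(* H_d fixes first letters, so a word permutes first letters by [root_prod]. *)
Lemma weval_first s ks x : (weval rho s ks).2 x 0 = permn (root_prod s ks) (x 0).
Proof.
elim/last_ind: ks => [|ks q IH] //.
by rewrite weval_rcons root_prod_rcons permnM -IH.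
Qed.

Definition winv s ks (y : bpt) : bpt :=
  root_act (s^-1)%g
    (foldr (fun p y => hact (hinv (rho p.1.1)) (root_act (p.2^-1)%g y)) y ks).

Lemma winv_rcons s ks q y :
  winv s (rcons ks q) y = winv s ks (hact (hinv (rho q.1.1)) (root_act (q.2^-1)%g y)).
Proof. by rewrite /winv foldr_rcons. Qed.

Lemma weval_winv s ks y : (weval rho s ks).2 (winv s ks y) = y.
Proof.
elim/last_ind: ks y => [|ks q IH] y; first exact: root_actKV.
by rewrite weval_rcons winv_rcons /= IH hactKV root_actKV.
Qed.

Lemma winv_weval s ks x : winv s ks ((weval rho s ks).2 x) = x.
Proof.
elim/last_ind: ks x => [|ks q IH] x; first exact: root_actK.
by rewrite weval_rcons winv_rcons /= root_actK hactK IH.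
Qed.

Lemma winv_first s ks y : winv s ks y 0 = permn ((root_prod s ks)^-1)%g (y 0).
Proof. by rewrite -{2}(weval_winv s ks y) weval_first permnK. Qed.

Lemma winv_first_eq s ks (i : nat) :
  (winv s ks one_pt 0 == i) = (permn (root_prod s ks) i == 0).
Proof.
rewrite winv_first; apply/eqP/eqP => [<-|e]; first by rewrite permnKV.
by have := permnK (root_prod s ks) i; rewrite e.
Qed.

Definition active_pts s ks : seq bpt :=
  [seq winv s (take j ks) one_pt | j <- iota 0 (size ks)].

Lemma active_pts_rcons s ks q :
  active_pts s (rcons ks q) = rcons (active_pts s ks) (winv s ks one_pt).
Proof.
rewrite /active_pts size_rcons.
have -> : iota 0 (size ks).+1 = rcons (iota 0 (size ks)) (size ks).
  by rewrite -cats1 -addn1 iotaD.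
have take_ks : take (size ks) (rcons ks q) = ks by rewrite -cats1 take_size_cat.
rewrite map_rcons take_ks; congr rcons.
apply/eq_in_map => j; rewrite mem_iota add0n => /andP[_ jk].
by rewrite -cats1 takel_cat // ltnW.
Qed.

Lemma activityE s ks : activity rho s ks = size (undup (active_pts s ks)).
Proof. exact: (ndistinctE (fun j => ginv_pt rho s ks j)). Qed.

End FixedTree.
End Words.

(* phi_f is supported on 1^oo, which lies below the letter 0. *)
Lemma phi_fE (fT : finGroupType) (f : fT) x :
  phi_f f x = if pb (x = one_pt) then f else 1%g.
Proof.
rewrite /phi_f (@pb_iff _ (x = one_pt)) //; split=> [H|-> //].
exact: functional_extensionality.
Qed.

Lemma phi_f_pcons0 (fT : finGroupType) (f : fT) y : phi_f f (pcons 0 y) = phi_f f y.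
Proof. by rewrite !phi_fE (@pb_iff (pcons 0 y = one_pt) (y = one_pt)) // pcons_eq_one; tauto. Qed.

Lemma phi_f_pconsN (fT : finGroupType) (f : fT) c y : c != 0 -> phi_f f (pcons c y) = 1%g.
Proof. by move=> cn0; rewrite phi_fE; case: pbP => // /pcons_eq_one [c0 _]; rewrite c0 in cn0. Qed.

Section Sections.
Variables (fT hT : finGroupType).

Definition srho d (rho : hT -> Hd d) : hT -> Hd (sd d) := fun a => shiftH (rho a).

(* Words over the shifted tree, with their list of letters stored in reverse
   order so that they can be extended on the right by consing. *)
Definition sword d := ({perm 'I_(d 1)} * seq ((hT * fT) * {perm 'I_(d 1)}))%type.

Definition sw_root d (w : sword d) (s : {perm 'I_(d 1)}) : sword d :=
  match w.2 with
  | [::] => ((w.1 * s)%g, [::])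
  | (k, t) :: r => (w.1, (k, (t * s)%g) :: r)
  end.

Definition sw_letter d (w : sword d) (k : hT * fT) : sword d := (w.1, (k, 1%g) :: w.2).

Definition sigma_at d (rho : hT -> Hd d) (a : hT) (c : nat) : {perm 'I_(d 1)} :=
  oapp (fun t : 'I_(d 0) => rho a 0 t) 1%g (insub c).

(* Reading a letter (k, s) of a word along the branch through the current
   first letter c: below c = 0 the letter k is seen in full, below c <> 0 only
   its rooted part sigma_{0,c}; then s moves the first letter. *)
Definition section_step d (rho : hT -> Hd d) (st : nat * sword d)
  (q : (hT * fT) * {perm 'I_(d 0)}) : nat * sword d :=
  (permn q.2 st.1,
   if st.1 == 0 then sw_letter st.2 q.1 else sw_root st.2 (sigma_at rho q.1.1 st.1)).

Definition section_state d (rho : hT -> Hd d) (s : {perm 'I_(d 0)})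
  (ks : seq ((hT * fT) * {perm 'I_(d 0)})) (i : nat) : nat * sword d :=
  foldl (section_step rho) (permn s i, (1%g, [::])) ks.

Definition sweval d (rho : hT -> Hd d) (w : sword d) : elt fT :=
  weval (srho rho) w.1 (rev w.2).

Definition sw_active_pts d (rho : hT -> Hd d) (w : sword d) : seq bpt :=
  active_pts (srho rho) w.1 (rev w.2).

Lemma sweval_root d (rho : hT -> Hd d) w s :
  sweval rho (sw_root w s) = emul (sweval rho w) (@erooted (sd d) fT s).
Proof.
case: w => s0 [|[k t] r]; rewrite /sweval /sw_root /=; first exact: erootedM.
by rewrite !rev_cons !weval_rcons /= (@erootedM fT (sd d)) !emulA.
Qed.

Lemma sweval_letter d (rho : hT -> Hd d) w k :
  sweval rho (sw_letter w k) = emul (sweval rho w) (eHF (srho rho) k.1 k.2).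
Proof.
case: w => s0 r; rewrite /sweval /sw_letter /= rev_cons weval_rcons /=.
by rewrite (@erooted1 fT (sd d)) emul_e1.
Qed.

Lemma sw_active_pts_letter d (rho : hT -> Hd d) w k :
  sw_active_pts rho (sw_letter w k) =
  rcons (sw_active_pts rho w) (winv (srho rho) w.1 (rev w.2) one_pt).
Proof. by case: w => s0 r; rewrite /sw_active_pts /sw_letter /= rev_cons active_pts_rcons. Qed.

Lemma sw_active_pts_root d (rho : hT -> Hd d) w s :
  sw_active_pts rho (sw_root w s) = sw_active_pts rho w.
Proof.
case: w => s0 [|[k t] r]; rewrite /sw_active_pts /sw_root //=.
by rewrite !rev_cons !active_pts_rcons.
Qed.

Lemma section_state_rcons d (rho : hT -> Hd d) s ks q i :
  section_state rho s (rcons ks q) i = section_step rho (section_state rho s ks i) q.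
Proof. by rewrite /section_state foldl_rcons. Qed.

Lemma section_state_first d (rho : hT -> Hd d) s ks i :
  (section_state rho s ks i).1 = permn (root_prod s ks) i.
Proof.
elim/last_ind: ks => [|ks q IH] //.
by rewrite section_state_rcons root_prod_rcons /= IH permnM.
Qed.

Lemma section_state_act d (rho : hT -> Hd d) s ks (i : nat) : i < d 0 -> forall y,
  (weval rho s ks).2 (pcons i y) =
     pcons (section_state rho s ks i).1 ((sweval rho (section_state rho s ks i).2).2 y) /\
  (weval rho s ks).1 (pcons i y) = (sweval rho (section_state rho s ks i).2).1 y.
Proof.
move=> id0; elim/last_ind: ks => [|ks q IH] y.
  by rewrite /sweval /= root_act_pcons (@root_act1 (sd d)).
have [IH2 IH1] := IH y.
have cd : (section_state rho s ks i).1 < d 0 by rewrite section_state_first permn_lt.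
rewrite section_state_rcons weval_rcons /section_step.
move: cd IH1 IH2; case: (section_state rho s ks i) => c w /= cd IH1 IH2.
case: (eqVneq c 0) => [c0|cn0].
  subst c; rewrite sweval_letter /= IH2 IH1 hact_pcons0 root_act_pcons.
  by rewrite mulg1 phi_f_pcons0.
rewrite sweval_root /= IH2 IH1 (hact_pconsN _ cd) // root_act_pcons.
by rewrite /sigma_at insubT /= phi_f_pconsN // !mulg1.
Qed.

Lemma section_state_active_pts d (rho : hT -> Hd d) s ks (i : nat) : i < d 0 ->
  sw_active_pts rho (section_state rho s ks i).2 =
  [seq ptail p | p <- active_pts rho s ks & p 0 == i].
Proof.
move=> id0; elim/last_ind: ks => [|ks q IH] //.
rewrite section_state_rcons active_pts_rcons filter_rcons winv_first_eq.
rewrite -(section_state_first rho s ks i).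
have act_i := section_state_act rho s ks id0.
move: IH act_i; rewrite /section_step.
case: (section_state rho s ks i) => c w /= IH act_i.
case: (eqVneq c 0) => [c0|cn0]; last by rewrite sw_active_pts_root IH.
subst c; rewrite /= sw_active_pts_letter IH map_rcons; congr rcons.
set y := winv _ _ _ _.
have [e _] := act_i y.
by rewrite weval_winv pcons0_one in e; rewrite -e winv_weval.
Qed.

End Sections.

Section PureWords.
Variables (fT hT : finGroupType).

Definition pure_word d (s : {perm 'I_(d 0)}) (ks : seq ((hT * fT) * {perm 'I_(d 0)})) :=
  (s == 1%g) && all (fun q => q.2 == 1%g) ks.

Definition simple_word d (s : {perm 'I_(d 0)}) (ks : seq ((hT * fT) * {perm 'I_(d 0)})) :=
  (ks == [::]) || pure_word s ks.

Definition word_hprod d (ks : seq ((hT * fT) * {perm 'I_(d 0)})) : hT :=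
  foldl (fun a q => (a * q.1.1)%g) 1%g ks.
Definition word_fprod d (ks : seq ((hT * fT) * {perm 'I_(d 0)})) : fT :=
  foldl (fun a q => (a * q.1.2)%g) 1%g ks.

Lemma rho1 d (rho : hT -> Hd d) : Hd_morph rho ->
  forall l (t : 'I_(d l)), val t != 0 -> rho 1%g l t = 1%g.
Proof.
move=> morph l t t0; apply: (mulgI (rho 1%g l t)).
by rewrite mulg1 -morph // mulg1.
Qed.

Lemma srho_morph d (rho : hT -> Hd d) : Hd_morph rho -> Hd_morph (srho rho).
Proof. by move=> morph a b l t; apply: morph. Qed.

(* As H_d fixes 1^oo, phi_f h phi_f' h' = phi_{f f'} h h': a pure word
   evaluates to the product of its letters. *)
Lemma weval_pure d (rho : hT -> Hd d) s ks : Hd_morph rho -> pure_word s ks ->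
  weval rho s ks = eHF rho (word_hprod ks) (word_fprod ks).
Proof.
move=> morph /andP[/eqP -> trivial_roots].
elim/last_ind: ks trivial_roots => [_|ks q IH].
  rewrite /weval /= /eHF /erooted /word_hprod /word_fprod /=.
  congr pair; apply: functional_extensionality => x.
    by rewrite phi_fE; case: pb.
  by rewrite root_act1 hact_id // => l t t0; rewrite rho1.
rewrite all_rcons => /andP[/eqP q2 trivial_roots].
rewrite weval_rcons IH // q2 erooted1 emul_e1 /word_hprod /word_fprod !foldl_rcons.
rewrite /emul /eHF /=; congr pair; apply: functional_extensionality => x.
  rewrite !phi_fE (@pb_iff (hact _ x = one_pt) (x = one_pt)); last exact: hact_eq_one.
  by case: pb; rewrite ?mulg1.
by rewrite hactM; apply: hact_ext => l t t0; rewrite /hmul morph.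
Qed.

Variant word_shape d (s : {perm 'I_(d 0)}) (ks : seq ((hT * fT) * {perm 'I_(d 0)})) :=
  | EmptyWord of ks = [::]
  | PureWord of ks != [::] & pure_word s ks
  | MixedWord of ks != [::] & ~~ pure_word s ks.

Lemma word_shapeP d s ks : @word_shape d s ks.
Proof.
case: (eqVneq ks [::]) => [|ne]; first exact: EmptyWord.
by case: (boolP (pure_word s ks)); [apply: PureWord | apply: MixedWord].
Qed.

End PureWords.

Lemma size_undup_map (T U : eqType) (f : T -> U) (s : seq T) :
  size (undup (map f s)) <= size (undup s).
Proof.
rewrite -(size_map f (undup s)); apply: uniq_leq_size (undup_uniq _) _ => y.
by rewrite mem_undup => /mapP[x xs ->]; apply: map_f; rewrite mem_undup.
Qed.

Lemma size_undup_const (T : eqType) (s : seq T) b :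
  (forall p, p \in s -> p = b) -> size (undup s) <= 1.
Proof.
move=> sb; apply: (@uniq_leq_size _ _ [:: b] (undup_uniq s)) => p.
by rewrite mem_undup inE => /sb ->.
Qed.

Lemma sum_count_first (U : seq bpt) n :
  \sum_(i < n) count (fun p : bpt => p 0 == i) U <= size U.
Proof.
elim: U => [|x U IH] /=; first by rewrite big1.
rewrite big_split /= -add1n leq_add //.
case: (ltnP (x 0) n) => [xn|nx].
  rewrite (bigD1 (Ordinal xn)) //= eqxx big1 // => j ne.
  suff /negbTE -> : x 0 != j by [].
  by apply: contra ne => /eqP e; apply/eqP/val_inj.
rewrite big1 // => j _; suff /negbTE -> : x 0 != j by [].
by apply: contraTneq (ltn_ord j) => <-; rewrite -leqNgt.
Qed.

Section SectionActivity.
Variables (fT hT : finGroupType) (d : nat -> nat) (rho : hT -> Hd d).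
Implicit Types (s : {perm 'I_(d 0)}) (ks : seq ((hT * fT) * {perm 'I_(d 0)})).

Definition wsection s ks (i : nat) : word fT hT (sd d) :=
  ((section_state rho s ks i).2.1, rev (section_state rho s ks i).2.2).

Lemma wsection_activity s ks (i : nat) : i < d 0 ->
  activity (srho rho) (wsection s ks i).1 (wsection s ks i).2 =
  size (undup [seq ptail p | p <- active_pts rho s ks & p 0 == i]).
Proof. by move=> id0; rewrite activityE -section_state_active_pts. Qed.

Lemma sum_wsection_activity s ks :
  \sum_(i < d 0) activity (srho rho) (wsection s ks i).1 (wsection s ks i).2
  <= activity rho s ks.
Proof.
rewrite activityE; apply: leq_trans (sum_count_first _ (d 0)).
apply: leq_sum => i _; rewrite wsection_activity //.
apply: leq_trans (size_undup_map _ _) _.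
by rewrite -filter_undup size_filter.
Qed.

Lemma wsection_activity_pos s ks (i : nat) p : i < d 0 ->
  p \in active_pts rho s ks -> p 0 = i ->
  0 < activity (srho rho) (wsection s ks i).1 (wsection s ks i).2.
Proof.
move=> id0 p_in pi; rewrite wsection_activity //.
have : ptail p \in undup [seq ptail p | p <- active_pts rho s ks & p 0 == i].
  by rewrite mem_undup; apply: map_f; rewrite mem_filter pi eqxx.
by case: (undup _).
Qed.

Lemma active_pts_first s ks p : 0 < d 0 -> p \in active_pts rho s ks -> p 0 < d 0.
Proof. by move=> d0 /mapP[j _ ->]; rewrite winv_first permn_lt. Qed.

Lemma active_pts_step s ks q :
  winv rho s (rcons ks q) one_pt = winv rho s ks one_pt \/
  winv rho s (rcons ks q) one_pt 0 != winv rho s ks one_pt 0.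
Proof.
rewrite winv_rcons; set z := hact _ _.
have z0 : z 0 = permn (q.2^-1)%g 0 by [].
case: (eqVneq (permn (q.2^-1)%g 0) 0) => [e0|en0].
  left; congr winv; apply/hact_eq_one.
  by rewrite {1}(pcons_eta one_pt) root_act_pcons e0 pcons0_one.
right; rewrite !winv_first z0.
by apply: contra en0 => /eqP/(can_inj (permnK _)) ->.
Qed.

Lemma active_pts_const s ks e :
  (forall p, p \in active_pts rho s ks -> p 0 = e) ->
  forall p, p \in active_pts rho s ks -> p = root_act (s^-1)%g one_pt.
Proof.
elim/last_ind: ks => [|ks q IH] // same p.
have same_ks : forall p, p \in active_pts rho s ks -> p 0 = e.
  by move=> r r_in; apply: same; rewrite active_pts_rcons mem_rcons inE r_in orbT.
rewrite active_pts_rcons mem_rcons inE => /orP[/eqP ->|]; last exact: IH.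
case/lastP: ks IH same same_ks => [|ks0 q0] // IH same same_ks.
have old_in : winv rho s ks0 one_pt \in active_pts rho s (rcons ks0 q0).
  by rewrite active_pts_rcons mem_rcons inE eqxx.
have new_in : winv rho s (rcons ks0 q0) one_pt \in active_pts rho s (rcons (rcons ks0 q0) q).
  by rewrite active_pts_rcons mem_rcons inE eqxx.
case: (active_pts_step s ks0 q0) => [->|]; first exact: IH.
by rewrite (same _ new_in) (same_ks _ old_in) eqxx.
Qed.

Lemma section_state_all s ks (i : nat) :
  (forall p, p \in active_pts rho s ks -> p 0 = i) ->
  (section_state rho s ks i).2 = (1%g, rev [seq (q.1, 1%g) | q <- ks]).
Proof.
elim/last_ind: ks => [|ks q IH] //; rewrite active_pts_rcons => all_i.
have last_i : winv rho s ks one_pt 0 == i.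
  by apply/eqP; apply: all_i; rewrite mem_rcons inE eqxx.
rewrite winv_first_eq -(section_state_first rho s ks i) in last_i.
rewrite section_state_rcons /section_step last_i IH ?map_rcons ?rev_rcons //.
by move=> p p_in; apply: all_i; rewrite mem_rcons inE p_in orbT.
Qed.

Lemma section_state_none s ks (i : nat) :
  (forall p, p \in active_pts rho s ks -> p 0 != i) ->
  (section_state rho s ks i).2.2 = [::].
Proof.
elim/last_ind: ks => [|ks q IH] //; rewrite active_pts_rcons => none_i.
have last_i : winv rho s ks one_pt 0 != i by apply: none_i; rewrite mem_rcons inE eqxx.
rewrite winv_first_eq -(section_state_first rho s ks i) in last_i.
rewrite section_state_rcons /section_step (negbTE last_i) /sw_root /=.
have none_ks : forall p, p \in active_pts rho s ks -> p 0 != i.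
  by move=> p p_in; apply: none_i; rewrite mem_rcons inE p_in orbT.
by move: (IH none_ks); case: (section_state rho s ks i) => c [s0 r] /= ->.
Qed.

(* Nonempty words are active: g_1^{-1}(1^oo) is an active point. *)
Lemma activity_pos s ks : ks != [::] -> 0 < activity rho s ks.
Proof.
rewrite activityE /active_pts; case: ks => [|q ks] //= _.
by case: ifP => // h; rewrite -mem_undup in h; case: (undup _) h.
Qed.

Lemma wsection_simple s ks (i : nat) : activity rho s ks = 1 ->
  simple_word (wsection s ks i).1 (wsection s ks i).2.
Proof.
rewrite activityE; case E: (undup (active_pts rho s ks)) => [|x [|y r]] // _.
have all_x : forall p, p \in active_pts rho s ks -> p = x.
  by move=> p; rewrite -mem_undup E inE => /eqP.
case: (eqVneq (x 0) i) => xi.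
  rewrite /wsection section_state_all => [|p /all_x -> //].
  rewrite /= revK /simple_word /pure_word eqxx all_map; apply/orP; right.
  by apply/allP => q _; exact: eqxx.
by rewrite /wsection section_state_none // => p /all_x ->.
Qed.

Lemma wsection_two_active s ks : 0 < d 0 -> 1 < activity rho s ks ->
  exists i1 i2 : 'I_(d 0), [/\ i1 != i2,
    0 < activity (srho rho) (wsection s ks i1).1 (wsection s ks i1).2 &
    0 < activity (srho rho) (wsection s ks i2).1 (wsection s ks i2).2].
Proof.
move=> d0 a2; have b_in : root_act (s^-1)%g one_pt \in active_pts rho s ks.
  by move: a2; rewrite activityE; case: ks => [|q ks] //= _; rewrite inE eqxx.
set b := root_act _ _ in b_in.
case: (boolP (all (fun p : bpt => p 0 == b 0) (active_pts rho s ks))) => [/allP same|].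
  have := size_undup_const (active_pts_const (fun p p_in => eqP (same p p_in))).
  by rewrite -activityE leqNgt a2.
rewrite -has_predC => /hasP[p p_in /= pb0].
have bd := active_pts_first d0 b_in; have pd := active_pts_first d0 p_in.
exists (Ordinal bd), (Ordinal pd); split; first by rewrite -val_eqE /= eq_sym.
  exact: (wsection_activity_pos bd b_in).
exact: (wsection_activity_pos pd p_in).
Qed.

End SectionActivity.

Arguments wsection : simpl never.

Lemma sum2_le n (F : 'I_n -> nat) i j : i != j -> F i + F j <= \sum_(k < n) F k.
Proof.
move=> ij; rewrite (bigD1 i) //= (bigD1 j) 1?eq_sym //=.
by rewrite addnA leq_addr.
Qed.

Lemma lt_sum_two_pos n (F : 'I_n -> nat) i i1 i2 :
  i1 != i2 -> 0 < F i1 -> 0 < F i2 -> F i < \sum_(k < n) F k.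
Proof.
move=> i12 p1 p2.
have [j ij pj] : exists2 j, i != j & 0 < F j.
  by case: (eqVneq i i1) => [->|ii1]; [exists i2 | exists i1].
by have := sum2_le F ij; lia.
Qed.

Definition code_bound (D a : nat) : nat := (D.+1 * a.*2.-1).+1.

(* The bound is superadditive enough: a word whose activity a is spread over
   at least two of its (at most D) sections has room for a head symbol. *)
Lemma sum_code_bound D n (F : 'I_n -> nat) a i1 i2 :
  n <= D -> \sum_(k < n) F k <= a -> i1 != i2 -> 0 < F i1 -> 0 < F i2 ->
  (\sum_(k < n) code_bound D (F k)).+1 <= code_bound D a.
Proof.
move=> nD sum_le i12 p1 p2; rewrite /code_bound.
set S := \sum_(k < n) F k in sum_le *.
set P := \sum_(k < n) (0 < F k).
have P2 : 2 <= P by have := sum2_le (fun k => nat_of_bool (0 < F k)) i12; rewrite /= p1 p2.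
have split_sum : \sum_(k < n) (D.+1 * (F k).*2.-1).+1 + D.+1 * P = (D.+1).*2 * S + n.
  rewrite -[n in RHS]card_ord -sum1_card big_distrr /= -big_split /= big_distrr /=.
  by rewrite -big_split /=; apply: eq_bigr => k _; case: (F k) => [|f] /=; lia.
have k1 : D.+1 * 2 <= D.+1 * P by apply: leq_mul.
have k2 : D.+1 * S <= D.+1 * a by apply: leq_mul.
have k3 : D.+1 * a.*2.-1 + D.+1 = (D.+1 * a).*2.
  have a2 : 0 < a.*2 by rewrite double_gt0; have := sum2_le F i12; lia.
  by rewrite -mulnSr prednK // doubleMr.
have k4 : (D.+1).*2 * S = (D.+1 * S).*2 by rewrite doubleMl.
lia.
Qed.

Lemma code_bound_le D a r : a <= r -> code_bound D a <= 2 * D.+1 * maxn r 1.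
Proof.
rewrite /code_bound; case: a => [|a] ar /=; first by have := leq_maxr r 1; nia.
have -> : maxn r 1 = r by apply/maxn_idPl; lia.
nia.
Qed.

Lemma flatten_prefix_free (I : eqType) (T : Type) (l : seq I) (F G : I -> seq T) r r' :
  (forall i, i \in l -> forall u u', F i ++ u = G i ++ u' -> F i = G i) ->
  flatten [seq F i | i <- l] ++ r = flatten [seq G i | i <- l] ++ r' ->
  forall i, i \in l -> F i = G i.
Proof.
elim: l r r' => [|x l IH] r r' //= prefix_free e i.
rewrite -!catA in e.
have Fx : F x = G x := prefix_free x (mem_head _ _) _ _ e.
have e' : flatten [seq F i | i <- l] ++ r = flatten [seq G i | i <- l] ++ r'.
  by move/(congr1 (drop (size (F x)))): e; rewrite {3}Fx !drop_size_cat.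
rewrite inE => /orP[/eqP -> //|il].
by apply: (IH _ _ _ e') il => j jl; apply: prefix_free; rewrite inE jl orbT.
Qed.

Lemma size_flatten_enum (T : Type) n (F : 'I_n -> seq T) :
  size (flatten [seq F i | i <- enum 'I_n]) = \sum_(i < n) size (F i).
Proof.
transitivity (\sum_(i <- enum 'I_n) size (F i)); last by rewrite big_enum.
by elim: (enum 'I_n) => [|x l IH]; rewrite ?big_nil ?big_cons //= size_cat IH.
Qed.

Section Encoding.
Variables (fT hT : finGroupType).

Definition perm_code n (s : {perm 'I_n}) : nat := enum_rank s.
Definition hf_code (a : hT) (f : fT) : nat := enum_rank a * #|fT| + enum_rank f.

Lemma perm_code_inj n : injective (@perm_code n).
Proof. by move=> s s' e; apply: enum_rank_inj; apply: val_inj. Qed.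

Lemma hf_code_inj (a a' : hT) (f f' : fT) : hf_code a f = hf_code a' f' -> a = a' /\ f = f'.
Proof.
rewrite /hf_code => e.
have f_lt := ltn_ord (enum_rank f); have f'_lt := ltn_ord (enum_rank f').
have F_pos : 0 < #|fT| by apply: leq_ltn_trans f_lt.
have e1 := congr1 (fun x => x %/ #|fT|) e; have e2 := congr1 (fun x => x %% #|fT|) e.
rewrite /= !divnMDl // !divn_small // !addn0 in e1.
rewrite /= !modnMDl !modn_small // in e2.
by split; apply: enum_rank_inj; apply: val_inj.
Qed.

(* Its head symbol is 0, 1 or 2
   mod 3 according as the word is empty, pure or mixed, and carries s_1, the
   pair (prod h, prod f), or the product of the rooted letters respectively;
   a mixed word continues with the codes of its sections. *)
Fixpoint code (n : nat) (d : nat -> nat) (rho : hT -> Hd d) (s : {perm 'I_(d 0)})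
  (ks : seq ((hT * fT) * {perm 'I_(d 0)})) {struct n} : seq nat :=
  match n with
  | 0 => [::]
  | n'.+1 =>
    if ks is [::] then [:: 3 * perm_code s]
    else if pure_word s ks then [:: (3 * hf_code (word_hprod ks) (word_fprod ks)).+1]
    else (3 * perm_code (root_prod s ks)).+2 ::
         flatten [seq code n' (srho rho) (wsection rho s ks i).1 (wsection rho s ks i).2
                 | i : 'I_(d 0) <- enum 'I_(d 0)]
  end.

(* Enough fuel for the code of a word: it decreases along sections. *)
Definition weight d (rho : hT -> Hd d) (s : {perm 'I_(d 0)})
  (ks : seq ((hT * fT) * {perm 'I_(d 0)})) : nat :=
  if ks is [::] then 0 else if pure_word s ks then 1 else (activity rho s ks).*2.

Section Unfold.
Variables (n : nat) (d : nat -> nat) (rho : hT -> Hd d) (s : {perm 'I_(d 0)}).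
Variable ks : seq ((hT * fT) * {perm 'I_(d 0)}).

Lemma code_nil : code n.+1 rho s [::] = [:: 3 * perm_code s].
Proof. by []. Qed.

Lemma code_pure : ks != [::] -> pure_word s ks ->
  code n.+1 rho s ks = [:: (3 * hf_code (word_hprod ks) (word_fprod ks)).+1].
Proof. by case: ks => //= q ks' _ ->. Qed.

Lemma code_mixed : ks != [::] -> ~~ pure_word s ks ->
  code n.+1 rho s ks = (3 * perm_code (root_prod s ks)).+2 ::
    flatten [seq code n (srho rho) (wsection rho s ks i).1 (wsection rho s ks i).2
            | i : 'I_(d 0) <- enum 'I_(d 0)].
Proof. by case: ks => //= q ks' _ /negbTE ->. Qed.

Lemma size_code_simple m : simple_word s ks -> size (code m rho s ks) <= 1.
Proof. by case: m => // m; case/orP => [/eqP -> //|]; case: ks => //= q ks' ->. Qed.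

Lemma weight_le : weight rho s ks <= (activity rho s ks).*2.
Proof.
rewrite /weight; case E: ks => [|q ks'] //; case: ifP => // _.
by have := activity_pos rho s (ks := q :: ks') erefl; rewrite -E; lia.
Qed.

Lemma weight_simple : simple_word s ks -> weight rho s ks <= 1.
Proof. by case/orP => [/eqP -> //|]; rewrite /weight; case: ks => // q ks' ->. Qed.

Lemma weight_mixed : ks != [::] -> ~~ pure_word s ks ->
  weight rho s ks = (activity rho s ks).*2.
Proof. by rewrite /weight; case: ks => // q ks' _ /negbTE ->. Qed.

End Unfold.

Lemma weight_wsection d (rho : hT -> Hd d) s ks (i : 'I_(d 0)) :
  ks != [::] -> ~~ pure_word s ks ->
  weight (srho rho) (wsection rho s ks i).1 (wsection rho s ks i).2 < weight rho s ks.
Proof.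
move=> ne mixed; rewrite (weight_mixed rho ne mixed).
have d0 : 0 < d 0 by apply: leq_ltn_trans (ltn_ord i).
have a_pos := activity_pos rho s ne.
have w_le := weight_le (srho rho) (wsection rho s ks i).1 (wsection rho s ks i).2.
case: (ltngtP (activity rho s ks) 1) => [|a2|a1]; first lia.
  have [i1 [i2 [i12 p1 p2]]] := wsection_two_active d0 a2.
  pose F (k : 'I_(d 0)) := activity (srho rho) (wsection rho s ks k).1 (wsection rho s ks k).2.
  have : F i < \sum_(k < d 0) F k := lt_sum_two_pos i i12 p1 p2.
  by have := sum_wsection_activity rho s ks; rewrite /F; lia.
by have := weight_simple (srho rho) (wsection_simple i a1); rewrite a1.
Qed.

Lemma weval_sections_eeq d (rho : hT -> Hd d) (s s' : {perm 'I_(d 0)})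
  (ks ks' : seq ((hT * fT) * {perm 'I_(d 0)})) :
  root_prod s ks = root_prod s' ks' ->
  (forall i : 'I_(d 0),
     eeq (sd d) (weval (srho rho) (wsection rho s ks i).1 (wsection rho s ks i).2)
                (weval (srho rho) (wsection rho s' ks' i).1 (wsection rho s' ks' i).2)) ->
  eeq d (weval rho s ks) (weval rho s' ks').
Proof.
move=> rp_eq sec_eq x x_valid; rewrite (pcons_eta x).
have xd : x 0 < d 0 := x_valid 0.
have [act2 act1] := section_state_act rho s ks xd (ptail x).
have [act2' act1'] := section_state_act rho s' ks' xd (ptail x).
have [E1 E2] := sec_eq (Ordinal xd) (ptail x) (fun j => x_valid j.+1).
rewrite act2 act2' act1 act1' !section_state_first rp_eq; split; first exact: E1.
by case=> [|j] //=; apply: E2.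
Qed.

Lemma code_prefix_free n d (rho : hT -> Hd d) s s' ks ks' r r' :
  (forall j, 0 < d j) -> weight rho s ks < n -> weight rho s' ks' < n ->
  code n rho s ks ++ r = code n rho s' ks' ++ r' -> code n rho s ks = code n rho s' ks'.
Proof.
elim: n d rho s s' ks ks' r r' => [|n IH] d rho s s' ks ks' r r' d_pos w_lt w'_lt //.
case: (word_shapeP s ks) => [->|ne pure|ne mixed];
  rewrite ?code_nil ?(code_pure _ _ ne pure) ?(code_mixed _ _ ne mixed);
case: (word_shapeP s' ks') => [->|ne' pure'|ne' mixed'];
  rewrite ?code_nil ?(code_pure _ _ ne' pure') ?(code_mixed _ _ ne' mixed') !cat_cons;
  move=> -[head_eq]; rewrite ?head_eq //; try by move=> *; exfalso; lia.
move=> tail_eq; congr (_ :: flatten _); apply/eq_in_map.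
apply: (flatten_prefix_free _ tail_eq) => i _ u u'; apply: IH.
- by move=> j; apply: d_pos.
- exact: leq_trans (weight_wsection rho i ne mixed) w_lt.
- exact: leq_trans (weight_wsection rho i ne' mixed') w'_lt.
Qed.

Lemma code_eval n d (rho : hT -> Hd d) s s' ks ks' :
  Hd_morph rho -> (forall j, 0 < d j) -> weight rho s ks < n -> weight rho s' ks' < n ->
  code n rho s ks = code n rho s' ks' -> eeq d (weval rho s ks) (weval rho s' ks').
Proof.
elim: n d rho s s' ks ks' => [|n IH] d rho s s' ks ks' morph d_pos w_lt w'_lt //.
case: (word_shapeP s ks) => [->|ne pure|ne mixed];
  rewrite ?code_nil ?(code_pure _ _ ne pure) ?(code_mixed _ _ ne mixed);
case: (word_shapeP s' ks') => [->|ne' pure'|ne' mixed'];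
  rewrite ?code_nil ?(code_pure _ _ ne' pure') ?(code_mixed _ _ ne' mixed');
  move=> -[head_eq]; try by move=> *; exfalso; lia.
- have -> : s = s' by apply: perm_code_inj; lia.
  by move=> x _.
- rewrite !weval_pure //.
  have [-> ->] : word_hprod ks = word_hprod ks' /\ word_fprod ks = word_fprod ks'.
    by apply: hf_code_inj; lia.
  by move=> x _.
- move=> tail_eq; apply: weval_sections_eeq => [|i]; first by apply: perm_code_inj; lia.
  apply: IH.
  + exact: srho_morph.
  + by move=> j; apply: d_pos.
  + exact: leq_trans (weight_wsection rho i ne mixed) w_lt.
  + exact: leq_trans (weight_wsection rho i ne' mixed') w'_lt.
  + apply: (flatten_prefix_free _ (congr1 (cat^~ [::]) tail_eq) (mem_enum _ i)).
    move=> j _ u u'; apply: code_prefix_free.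
    * by move=> k; apply: d_pos.
    * exact: leq_trans (weight_wsection rho j ne mixed) w_lt.
    * exact: leq_trans (weight_wsection rho j ne' mixed') w'_lt.
Qed.

Lemma code_size n D d (rho : hT -> Hd d) s ks :
  (forall j, 0 < d j <= D) -> weight rho s ks < n ->
  size (code n rho s ks) <= code_bound D (activity rho s ks).
Proof.
elim: n d rho s ks => [|n IH] d rho s ks dD w_lt //.
case: (word_shapeP s ks) => [->|ne pure|ne mixed]; first by rewrite code_nil.
  by rewrite (code_pure _ _ ne pure).
have [d0 d0D] := andP (dD 0).
rewrite (code_mixed _ _ ne mixed) /= size_flatten_enum.
have a_pos := activity_pos rho s ne.
case: (ltngtP (activity rho s ks) 1) => [|a2|a1]; first lia.
  have [i1 [i2 [i12 p1 p2]]] := wsection_two_active d0 a2.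
  apply: leq_trans (sum_code_bound d0D (sum_wsection_activity rho s ks) i12 p1 p2).
  rewrite ltnS; apply: leq_sum => i _; apply: IH => [j|]; first exact: dD.
  exact: leq_trans (weight_wsection rho i ne mixed) w_lt.
apply: (@leq_trans (\sum_(i < d 0) 1).+1).
  by rewrite ltnS; apply: leq_sum => i _; apply/size_code_simple/wsection_simple.
by rewrite sum1_card card_ord a1 /code_bound /=; lia.
Qed.

Lemma code_alphabet n D m d (rho : hT -> Hd d) s ks :
  (forall j, d j <= D) -> #|hT| * #|fT| <= m ->
  all (fun x => x < 3 * (D`! + m) + 3) (code n rho s ks).
Proof.
move=> dD HF_m.
have perm_lt k (t : {perm 'I_k}) : k <= D -> perm_code t < D`!.
  by move=> kD; apply: leq_trans (leq_fact kD); rewrite /perm_code -card_Sn; apply: ltn_ord.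
have hf_lt (a : hT) (f : fT) : hf_code a f < m.
  apply: leq_trans HF_m; rewrite /hf_code.
  apply: (@leq_trans ((enum_rank a).+1 * #|fT|)).
    by rewrite mulSn addnC ltn_add2r.
  by rewrite leq_mul2r ltn_ord orbT.
elim: n d rho s ks dD => [|n IH] d rho s ks dD //.
case: (word_shapeP s ks) => [->|ne pure|ne mixed].
- by rewrite code_nil /=; have := perm_lt _ s (dD 0); lia.
- by rewrite (code_pure _ _ ne pure) /=; have := hf_lt (word_hprod ks) (word_fprod ks); lia.
rewrite (code_mixed _ _ ne mixed) /=; apply/andP; split.
  by have := perm_lt _ (root_prod s ks) (dD 0); lia.
apply/allP => x /flattenP[u /mapP[i _ ->]].
exact: (allP (IH (sd d) (srho rho) _ _ (fun j => dD j.+1))).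
Qed.

End Encoding.

Definition pad (L A : nat) (u : seq nat) : L.-tuple 'I_A.+1 :=
  [tuple (inord (nth A u j) : 'I_A.+1) | j < L].

Lemma pad_inj L A (u u' : seq nat) : size u <= L -> size u' <= L ->
  all (fun x => x < A) u -> all (fun x => x < A) u' -> pad L A u = pad L A u' -> u = u'.
Proof.
move=> uL u'L /allP uA /allP u'A e.
have nth_le (v : seq nat) j : (forall x, x \in v -> x < A) -> nth A v j <= A.
  move=> vA; case: (ltnP j (size v)) => jv; last by rewrite nth_default.
  exact/ltnW/vA/mem_nth.
have nth_eq j : nth A u j = nth A u' j.
  case: (ltnP j L) => jL; last by rewrite !nth_default // (leq_trans _ jL).
  have := congr1 (fun t => val (tnth t (Ordinal jL))) e.
  by rewrite /pad !tnth_mktuple /= !inordK // ltnS; apply: nth_le.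
have size_eq : size u = size u'.
  case: (ltngtP (size u) (size u')) => // lt_size.
    by have := u'A _ (mem_nth A lt_size); rewrite -nth_eq nth_default ?ltnn.
  by have := uA _ (mem_nth A lt_size); rewrite nth_eq nth_default ?ltnn.
by apply: (eq_from_nth size_eq) => j _; apply: nth_eq.
Qed.

Lemma finite_representatives (W E : Type) (K : finType) (P : W -> Prop)
  (c : W -> K) (ev : W -> E) (R : E -> E -> Prop) (e0 : E) :
  (forall w w', P w -> P w' -> c w = c w' -> R (ev w) (ev w')) ->
  exists L : 'I_#|K| -> E, forall w, P w -> exists i, R (ev w) (L i).
Proof.
move=> c_det.
pose rep (k : K) : E :=
  if excluded_middle_informative (exists w, P w /\ c w = k) is left ex
  then ev (proj1_sig (constructive_indefinite_description _ ex)) else e0.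
exists (fun i => rep (enum_val i)) => w Pw; exists (enum_rank (c w)).
rewrite enum_rankK /rep; case: excluded_middle_informative => [ex|[]]; last by exists w.
case: (constructive_indefinite_description _ ex) => w' [Pw' cw'] /=.
exact: c_det Pw Pw' (esym cw').
Qed.

Theorem mainTheorem5 (D m : nat) :
  exists C : nat,
    forall d : nat -> nat, (forall j, 2 <= d j <= D) ->
    forall (fT hT : finGroupType) (rho : hT -> Hd d),
      Hd_morph rho -> Hd_inj rho -> Hd_uniform rho ->
      #|hT| * #|fT| = m ->
      forall r : nat,
        exists (N : nat) (L : 'I_N -> elt fT),
          N <= C ^ maxn r 1 /\
          forall (s1 : {perm 'I_(d 0)}) (ks : seq ((hT * fT) * {perm 'I_(d 0)})),
            activity rho s1 ks <= r ->
            exists i : 'I_N, eeq d (weval rho s1 ks) (L i).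
Proof.
pose A := 3 * (D`! + m) + 3.
exists (A.+1 ^ (2 * D.+1)) => d dD fT hT rho morph _ _ HF_m r.
have d_pos j : 0 < d j <= D by case/andP: (dD j) => /ltnW -> ->.
pose Lm := 2 * D.+1 * maxn r 1.
pose n := (2 * r).+1.
have code_ok (w : word fT hT d) : activity rho w.1 w.2 <= r ->
    [/\ weight rho w.1 w.2 < n, size (code n rho w.1 w.2) <= Lm
      & all (fun x => x < A) (code n rho w.1 w.2)].
  move=> a_le; split.
  - by have := weight_le rho w.1 w.2; rewrite /n; lia.
  - apply: leq_trans (code_bound_le D a_le).
    by apply: code_size => //; have := weight_le rho w.1 w.2; rewrite /n; lia.
  - by apply: code_alphabet => [j|]; [case/andP: (d_pos j) | rewrite HF_m].
have c_det (w w' : word fT hT d) :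
    activity rho w.1 w.2 <= r -> activity rho w'.1 w'.2 <= r ->
    pad Lm A (code n rho w.1 w.2) = pad Lm A (code n rho w'.1 w'.2) ->
    eeq d (weval rho w.1 w.2) (weval rho w'.1 w'.2).
  move=> /code_ok[w_lt size_le sym] /code_ok[w'_lt size_le' sym'] /pad_inj.
  by move/(_ size_le size_le' sym sym'); apply: code_eval => // j; case/andP: (d_pos j).
have [L covers] := @finite_representatives _ _ (Lm.-tuple 'I_A.+1)
  (fun w => activity rho w.1 w.2 <= r) (fun w => pad Lm A (code n rho w.1 w.2))
  (fun w => weval rho w.1 w.2) (@eeq d fT) (eid fT) c_det.
exists _, L; split; first by rewrite card_tuple card_ord -expnM.
by move=> s1 ks a_le; apply: (covers (s1, ks)).
Qed.
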